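(* Let $\alpha\in[0,\pi/2)$, $A,B\in\Pi^n_{s,\alpha}$ and $q\in\mathbb{C}$ with $0<|q|\le1$. Then \[ |q|\,w_q(AB\pm BA)\le 2\sec(\alpha)\min\{w_q(A)\|B\|,\ w_q(B)\|A\|\}. \]
   Context: $M_n$ is the algebra of complex $n\times n$ matrices with the operator norm $\|\cdot\|$. For $|q|\le1$, $w_q(A)=\sup\{|\langle Ax,y\rangle|: \|x\|=\|y\|=1,\ \langle x,y\rangle=q\}$. $W(A)=\{\langle Ax,x\rangle:\|x\|=1\}$, $S_\alpha=\{z:\operatorname{Re}z>0,\ |\operatorname{Im}z|\le\tan(\alpha)\operatorname{Re}z\}$ and $\Pi^n_{s,\alpha}=\{A\in M_n: W(A)\subseteq S_\alpha\}$. *)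

From HB Require Import structures.
From mathcomp Require Import all_boot all_order all_algebra.
From mathcomp Require Import all_classical reals trigo.
From mathcomp Require Import complex.

Set Implicit Arguments.
Unset Strict Implicit.
Unset Printing Implicit Defensive.

Import Order.TTheory GRing.Theory Num.Theory.
Local Open Scope ring_scope.
Local Open Scope classical_set_scope.

Section Defs.
Variable R : realType.
Local Notation C := R[i].

Definition cdot (n : nat) (x y : 'cV[C]_n) : C := \sum_(k < n) x k 0 * (y k 0)^*.

Definition vnorm (n : nat) (x : 'cV[C]_n) : R := Num.sqrt (complex.Re (cdot x x)).

Definition usphere (n : nat) : set 'cV[C]_n := [set x | vnorm x = 1].

Definition opnorm (n : nat) (A : 'M[C]_n) : R :=
  sup [set vnorm (A *m x) | x in @usphere n].

Definition wq (n : nat) (q : C) (A : 'M[C]_n) : R :=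
  sup [set Normc.normc (cdot (A *m xy.1) xy.2) |
        xy in [set xy : 'cV[C]_n * 'cV[C]_n |
                 vnorm xy.1 = 1 /\ vnorm xy.2 = 1 /\ cdot xy.1 xy.2 = q]].

Definition numrange (n : nat) (A : 'M[C]_n) : set C :=
  [set cdot (A *m x) x | x in @usphere n].

Definition sector (alpha : R) : set C :=
  [set z : C | 0 < complex.Re z /\ `|complex.Im z| <= tan alpha * complex.Re z].

Definition Pi_s (n : nat) (alpha : R) : set 'M[C]_n :=
  [set A | numrange A `<=` sector alpha].

End Defs.

From HB Require Import structures.
From mathcomp Require Import all_boot all_order all_algebra.
From mathcomp Require Import all_classical reals trigo.
From mathcomp Require Import complex.
From mathcomp Require Import ring lra.

Set Implicit Arguments.
Unset Strict Implicit.
Unset Printing Implicit Defensive.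

Import Order.TTheory GRing.Theory Num.Theory.
Local Open Scope complex_scope.
Local Open Scope ring_scope.
Local Open Scope classical_set_scope.

(* If W(A) lies in the sector of slope t = tan(alpha), then for s > t the
   forms (s - i)<A.,.> and (s + i)<A.,.>, made Hermitian, are positive
   semidefinite, and A is a combination of them; Cauchy-Schwarz for each
   gives |<Ax,y>|^2 <= (1 + s^2) Re<Ax,x> Re<Ay,y>, and letting s decrease to t
   the factor becomes sec^2(alpha).  With y = Ax this yields
   ||A|| <= sec(alpha) sup_{|z| = 1} Re<Az,z>.  For a unit vector z the vectors
   y = q^* z +- sqrt(1 - |q|^2) w, with w a unit vector orthogonal to z, satisfy
   <z,y> = q and average to q^* z, so |q| |<Az,z>| <= w_q(A); hence
   |q| ||A|| <= sec(alpha) w_q(A).  The theorem follows from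
   w_q(AB +- BA) <= ||AB +- BA|| <= 2 ||A|| ||B||. *)

Local Notation Re := complex.Re.
Local Notation Im := complex.Im.

Section RealInequalities.
Variable R : rcfType.
Implicit Types a b p m s t N K : R.

Lemma le_of_sqr_le a b : 0 <= b -> a ^+ 2 <= b ^+ 2 -> a <= b.
Proof. by move=> b0 h; nra. Qed.

Lemma le_mul_of_quadratic_ge0 a b N : 0 <= b -> 0 <= N ->
  (forall s, 0 <= a - 2 * s * N + s ^+ 2 * N * b) -> N <= a * b.
Proof.
move=> b0 N0 hq; have [b_gt0|b_le0] := ltP 0 b.
  have := hq b^-1.
  have -> : a - 2 * b^-1 * N + b^-1 ^+ 2 * N * b = a - N / b.
    by field; rewrite gt_eqF.
  by rewrite subr_ge0 ler_pdivrMr.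
have b_eq0 : b = 0 by apply/le_anti; rewrite b_le0 b0.
rewrite {}b_eq0 in hq *; rewrite mulr0 leNgt; apply/negP => N_gt0.
have := hq ((a + 1) / (2 * N)).
have -> : a - 2 * ((a + 1) / (2 * N)) * N + ((a + 1) / (2 * N)) ^+ 2 * N * 0
    = - 1 by field; rewrite gt_eqF.
by rewrite oppr_ge0 ler10.
Qed.

Lemma sqrD_le_mulDD p m a1 a2 b1 b2 : 0 <= a1 -> 0 <= a2 -> 0 <= b1 -> 0 <= b2 ->
  p ^+ 2 <= a1 * b1 -> m ^+ 2 <= a2 * b2 -> (p + m) ^+ 2 <= (a1 + a2) * (b1 + b2).
Proof.
move=> a10 a20 b10 b20 hp hm.
have cross : 2 * (p * m) <= a1 * b2 + a2 * b1.
  apply: le_of_sqr_le; first by rewrite addr_ge0 // mulr_ge0.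
  have : (p * m) ^+ 2 <= (a1 * b1) * (a2 * b2) by rewrite exprMn ler_pM ?sqr_ge0.
  have := sqr_ge0 (a1 * b2 - a2 * b1); nra.
nra.
Qed.

Lemma le_1Dsqr_mul_limit t N K : 0 <= K ->
  (forall s, `|t| < s -> N <= (1 + s ^+ 2) * K) -> N <= (1 + t ^+ 2) * K.
Proof.
move=> K0 hN; apply/ler_addgt0Pr => e e_gt0.
pose d := e / (K + 1).
have d_gt0 : 0 < d by rewrite divr_gt0 // ltr_wpDl.
have t2d_ge0 : 0 <= t ^+ 2 + d by rewrite addr_ge0 ?sqr_ge0 // ltW.
have ts : `|t| < Num.sqrt (t ^+ 2 + d).
  by rewrite -sqrtr_sqr ltr_sqrt ?ltrDl // ltr_wpDl ?sqr_ge0.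
apply: le_trans (hN _ ts) _; rewrite sqr_sqrtr //.
have dK : d * K <= e.
  by rewrite /d mulrAC ler_pdivrMr ?ler_wpM2l ?lerDl ?ltW // ltr_wpDl.
have -> : (1 + (t ^+ 2 + d)) * K = (1 + t ^+ 2) * K + d * K by ring.
by rewrite lerD2l.
Qed.

End RealInequalities.

Section ComplexScalars.
Variable R : rcfType.
Local Notation C := R[i].
Implicit Types (t : R) (z : C).

Lemma normc_ge0 z : 0 <= Normc.normc z.
Proof. by case: z => a b; apply: sqrtr_ge0. Qed.

Lemma normc_sqr z : Normc.normc z ^+ 2 = Re z ^+ 2 + Im z ^+ 2.
Proof. by case: z => a b /=; rewrite sqr_sqrtr // addr_ge0 ?sqr_ge0. Qed.

Lemma mulcJ_normc z : z * z^* = (Normc.normc z ^+ 2)%:C.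
Proof. by case: z => a b; rewrite -sqr_normc normc_def rmorphXn. Qed.

Lemma Re_le_normc z : Re z <= Normc.normc z.
Proof. by apply: le_of_sqr_le; rewrite ?normc_ge0 // normc_sqr lerDl sqr_ge0. Qed.

Lemma normc_real t : Normc.normc t%:C = `|t|.
Proof. by rewrite /= expr0n addr0 sqrtr_sqr. Qed.

Lemma normc_conj z : Normc.normc z^* = Normc.normc z.
Proof. by case: z => a b /=; rewrite sqrrN. Qed.

Lemma conj_real t : t%:C^* = t%:C.
Proof. by apply: conj_Creal; apply/complex_realP; exists t. Qed.

Lemma Re_realM t z : Re (t%:C * z) = t * Re z.
Proof. by case: z => a b /=; rewrite mul0r subr0. Qed.

Lemma Im_realM t z : Im (t%:C * z) = t * Im z.
Proof. by case: z => a b /=; rewrite mul0r addr0. Qed.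

Lemma Re_subiM t z : Re ((t%:C - 'i) * z) = t * Re z + Im z.
Proof. by rewrite -complexiE; case: z => a b /=; ring. Qed.

Lemma Re_addiM t z : Re ((t%:C + 'i) * z) = t * Re z - Im z.
Proof. by rewrite -complexiE; case: z => a b /=; ring. Qed.

Lemma conj_subi t : (t%:C - 'i)^* = t%:C + 'i.
Proof. by rewrite rmorphB /= conj_real conjCi opprK. Qed.

Lemma conj_addi t : (t%:C + 'i)^* = t%:C - 'i.
Proof. by rewrite -conj_subi conjCK. Qed.

Lemma normc_1Di t : Normc.normc (1 + 'i * t%:C) = Num.sqrt (1 + t ^+ 2).
Proof. by rewrite -complexiE /=; congr Num.sqrt; ring. Qed.

Lemma normc_1Bi t : Normc.normc (1 - 'i * t%:C) = Num.sqrt (1 + t ^+ 2).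
Proof. by rewrite -complexiE /=; congr Num.sqrt; ring. Qed.

Definition closed_sector t : set C := [set z | 0 <= Re z /\ `|Im z| <= t * Re z].

Lemma closed_sector_le s t : s <= t -> closed_sector s `<=` closed_sector t.
Proof.
move=> st z [Re_ge0 Im_le]; split => //.
by apply: le_trans Im_le _; rewrite ler_wpM2r.
Qed.

Lemma closed_sector_scale t r z : 0 <= r -> closed_sector t z ->
  closed_sector t (r%:C * z).
Proof.
move=> r0 [Re_ge0 Im_le]; rewrite /closed_sector /= Re_realM Im_realM normrM.
by rewrite ger0_norm // mulr_ge0 // mulrCA ler_wpM2l.
Qed.

Lemma closed_sector_Re_rot t z : closed_sector t z ->
  0 <= Re ((t%:C - 'i) * z) /\ 0 <= Re ((t%:C + 'i) * z).
Proof.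
by case=> _; rewrite ler_norml Re_subiM Re_addiM => /andP[]; split; lra.
Qed.

End ComplexScalars.

Section HermitianForm.
Variables (R : rcfType) (V : lmodType R[i]) (f : V -> V -> R[i]).
Hypotheses (fDl : forall u v w, f (u + v) w = f u w + f v w)
  (fZl : forall a u w, f (a *: u) w = a * f u w)
  (f_herm : forall u v, f v u = (f u v)^*)
  (f_ge0 : forall u, 0 <= f u u).

Lemma hermitian_form_Cauchy_Schwarz x y :
  Normc.normc (f x y) ^+ 2 <= Re (f x x) * Re (f y y).
Proof.
have fDr u v w : f w (u + v) = f w u + f w v.
  by rewrite f_herm fDl rmorphD /= -!f_herm.
have fZr a u w : f w (a *: u) = a^* * f w u.
  by rewrite f_herm fZl rmorphM /= -f_herm.
have real_diag u : f u u = (Re (f u u))%:C by rewrite RRe_real // ger0_real.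
set c := f x y; set N := Normc.normc c ^+ 2.
have N_def : c * c^* = N%:C := mulcJ_normc c.
have N_ge0 : 0 <= N by rewrite exprn_ge0 ?normc_ge0.
clearbody N.
apply: le_mul_of_quadratic_ge0 => // [|s]; first by rewrite -lecR -real_diag.
rewrite -lecR.
have <- : f (x - (s%:C * c) *: y) (x - (s%:C * c) *: y) =
    (Re (f x x) - 2 * s * N + s ^+ 2 * N * Re (f y y))%:C.
  rewrite -scaleNr fDl !fDr !fZl !fZr (f_herm x y) -/c.
  rewrite {1}real_diag {1}(real_diag y) rmorphN rmorphM /= conj_real.
  rewrite !(rmorphD, rmorphB, rmorphN, rmorphM, rmorphXn, rmorph_nat) /= -N_def.
  ring.
exact: f_ge0.
Qed.

End HermitianForm.

Section SectorialForm.
Variables (R : rcfType) (V : lmodType R[i]) (f : V -> V -> R[i]).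
Hypotheses (fDl : forall u v w, f (u + v) w = f u w + f v w)
  (fZl : forall a u w, f (a *: u) w = a * f u w)
  (fDr : forall u v w, f w (u + v) = f w u + f w v)
  (fZr : forall a u w, f w (a *: u) = a^* * f w u).

Definition hermitian_part (b : R[i]) u v := b * f u v + (b * f v u)^*.

Lemma hermitian_part_Cauchy_Schwarz b x y : (forall u, 0 <= Re (b * f u u)) ->
  Normc.normc (hermitian_part b x y) ^+ 2
    <= (2 * Re (b * f x x)) * (2 * Re (b * f y y)).
Proof.
move=> Re_ge0.
have diag u : hermitian_part b u u = (2 * Re (b * f u u))%:C.
  rewrite /hermitian_part rmorphM /= -rmorphM; case: (b * f u u) => a c.
  by apply/eqP; rewrite eq_complex /= subrr eqxx andbT; apply/eqP; ring.
have := @hermitian_form_Cauchy_Schwarz _ _ (hermitian_part b) _ _ _ _ x y.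
rewrite !diag /=; apply=> [u v w|a u w|u v|u].
- by rewrite /hermitian_part fDl fDr !(rmorphM, rmorphD) /=; ring.
- by rewrite /hermitian_part fZl fZr !rmorphM /= conjCK; ring.
- by rewrite /hermitian_part rmorphD /= conjCK addrC.
- by rewrite diag lecR mulr_ge0.
Qed.

(* This recovers [f] only up to the factor [4 s], which is why the bound
   below is first proved for [s > 0] and then extended by a limit. *)
Lemma hermitian_part_decomp s x y :
  (1 + 'i * s%:C) * hermitian_part (s%:C - 'i) x y
    + (1 - 'i * s%:C) * hermitian_part (s%:C + 'i) x y = (4 * s)%:C * f x y.
Proof.
rewrite /hermitian_part !rmorphM /= conj_subi conj_addi rmorph_nat.
have i2 : 'i * 'i = -1 :> R[i] by rewrite -expr2 sqrCi.
ring: i2.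
Qed.

Lemma sectorial_form_bound_gt0 s x y : 0 < s ->
  (forall u, closed_sector s (f u u)) ->
  Normc.normc (f x y) ^+ 2 <= (1 + s ^+ 2) * (Re (f x x) * Re (f y y)).
Proof.
move=> s_gt0 hs.
have P_ge0 u : 0 <= Re ((s%:C - 'i) * f u u).
  by have [] := closed_sector_Re_rot (hs u).
have M_ge0 u : 0 <= Re ((s%:C + 'i) * f u u).
  by have [] := closed_sector_Re_rot (hs u).
have diag_sum u : 2 * Re ((s%:C - 'i) * f u u) + 2 * Re ((s%:C + 'i) * f u u)
    = 4 * s * Re (f u u) by rewrite Re_subiM Re_addiM; ring.
set p := Normc.normc (hermitian_part (s%:C - 'i) x y).
set m := Normc.normc (hermitian_part (s%:C + 'i) x y).
have pm : (p + m) ^+ 2 <= (4 * s * Re (f x x)) * (4 * s * Re (f y y)).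
  rewrite -!diag_sum; apply: sqrD_le_mulDD; rewrite ?mulr_ge0 //;
  exact: hermitian_part_Cauchy_Schwarz.
have tri : 4 * s * Normc.normc (f x y) <= Num.sqrt (1 + s ^+ 2) * (p + m).
  have := le_normcD ((1 + 'i * s%:C) * hermitian_part (s%:C - 'i) x y)
    ((1 - 'i * s%:C) * hermitian_part (s%:C + 'i) x y).
  rewrite hermitian_part_decomp !Normc.normcM normc_real normc_1Di normc_1Bi.
  by rewrite -mulrDr ger0_norm // mulr_ge0 // ltW.
have s2_ge0 : 0 <= 1 + s ^+ 2 by rewrite addr_ge0 ?sqr_ge0.
have sq : (4 * s * Normc.normc (f x y)) ^+ 2 <= (1 + s ^+ 2) * (p + m) ^+ 2.
  rewrite -(sqr_sqrtr s2_ge0) -exprMn ler_sqr ?nnegrE //.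
  - by rewrite !mulr_ge0 ?normc_ge0 // ltW.
  - by rewrite mulr_ge0 ?sqrtr_ge0 ?addr_ge0 ?normc_ge0.
have s16 : 0 < (4 * s) ^+ 2 by rewrite exprn_gt0 // mulr_gt0.
rewrite -(ler_pM2l s16) -exprMn; apply: (le_trans sq).
have -> : (4 * s) ^+ 2 * ((1 + s ^+ 2) * (Re (f x x) * Re (f y y)))
    = (1 + s ^+ 2) * ((4 * s * Re (f x x)) * (4 * s * Re (f y y))) by ring.
by rewrite ler_wpM2l.
Qed.

Lemma sectorial_form_bound t x y : (forall u, closed_sector t (f u u)) ->
  Normc.normc (f x y) ^+ 2 <= (1 + t ^+ 2) * (Re (f x x) * Re (f y y)).
Proof.
move=> ht; apply: le_1Dsqr_mul_limit => [|s ts].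
  by have [[? _] [? _]] := (ht x, ht y); rewrite mulr_ge0.
apply: sectorial_form_bound_gt0 => [|u]; first exact: le_lt_trans ts.
by apply: closed_sector_le (ht u); apply: le_trans (ler_norm t) (ltW ts).
Qed.

End SectorialForm.

Section InnerProduct.
Variables (R : realType) (n : nat).
Local Notation C := R[i].
Local Notation V := 'cV[C]_n.
Implicit Types (x y z u v w : V).

Lemma cdotDl x y z : cdot (x + y) z = cdot x z + cdot y z.
Proof. by rewrite /cdot -big_split; apply: eq_bigr => k _; rewrite mxE mulrDl. Qed.

Lemma cdotZl (a : C) x z : cdot (a *: x) z = a * cdot x z.
Proof. by rewrite /cdot mulr_sumr; apply: eq_bigr => k _; rewrite mxE mulrA. Qed.

Lemma cdotC x y : cdot y x = (cdot x y)^*.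
Proof.
rewrite /cdot rmorph_sum; apply: eq_bigr => k _.
by rewrite rmorphM /= conjCK mulrC.
Qed.

Lemma cdotDr x y z : cdot z (x + y) = cdot z x + cdot z y.
Proof. by rewrite cdotC cdotDl rmorphD /= -!cdotC. Qed.

Lemma cdotZr (a : C) x z : cdot z (a *: x) = a^* * cdot z x.
Proof. by rewrite cdotC cdotZl rmorphM /= -cdotC. Qed.

Lemma cdot0l y : cdot 0 y = 0.
Proof. by rewrite -(scale0r 0) cdotZl mul0r. Qed.

Lemma cdot_ge0 x : 0 <= cdot x x.
Proof. by apply: sumr_ge0 => k _; rewrite mul_conjC_ge0. Qed.

Lemma cdot_real x : cdot x x = (Re (cdot x x))%:C.
Proof. by rewrite RRe_real // ger0_real // cdot_ge0. Qed.

Lemma vnorm_ge0 x : 0 <= vnorm x.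
Proof. exact: sqrtr_ge0. Qed.

Lemma vnorm_sqr x : vnorm x ^+ 2 = Re (cdot x x).
Proof. by rewrite sqr_sqrtr // -lecR -cdot_real cdot_ge0. Qed.

Lemma cdot_unit z : vnorm z = 1 -> cdot z z = 1.
Proof. by move=> z1; rewrite cdot_real -vnorm_sqr z1 expr1n. Qed.

Lemma vnorm0 : vnorm (0 : V) = 0.
Proof. by rewrite /vnorm cdot0l sqrtr0. Qed.

Lemma vnorm_eq0 x : vnorm x = 0 -> x = 0.
Proof.
move=> x0; have xx0 : cdot x x = 0 by rewrite cdot_real -vnorm_sqr x0 expr0n.
apply/matrixP => k j; rewrite (ord1 j) mxE; apply/eqP; rewrite -mul_conjC_eq0.
by rewrite (psumr_eq0P (fun i _ => mul_conjC_ge0 (x i 0)) xx0).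
Qed.

Lemma vnormZ (a : C) x : vnorm (a *: x) = Normc.normc a * vnorm x.
Proof.
rewrite /vnorm cdotZl cdotZr mulrA mulcJ_normc Re_realM sqrtrM ?sqr_ge0 //.
by rewrite sqrtr_sqr ger0_norm // normc_ge0.
Qed.

Lemma normc_cdot_le x y : Normc.normc (cdot x y) <= vnorm x * vnorm y.
Proof.
apply: le_of_sqr_le; first by rewrite mulr_ge0 ?vnorm_ge0.
rewrite exprMn !vnorm_sqr; apply: hermitian_form_Cauchy_Schwarz.
- exact: cdotDl.
- exact: cdotZl.
- exact: cdotC.
- exact: cdot_ge0.
Qed.

Lemma vnormD x y : vnorm (x + y) <= vnorm x + vnorm y.
Proof.
apply: le_of_sqr_le; first by rewrite addr_ge0 ?vnorm_ge0.
rewrite vnorm_sqr cdotDl !cdotDr !raddfD /= (cdotC x y) sqrrD -!vnorm_sqr.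
have Re_conj (c : C) : Re c^* = Re c by case: c.
rewrite Re_conj; have := Re_le_normc (cdot x y); have := normc_cdot_le x y.
lra.
Qed.

Lemma vnormN x : vnorm (- x) = vnorm x.
Proof. by rewrite -scaleN1r vnormZ normcN Normc.normc1 mul1r. Qed.

Lemma vnorm_sum (I : finType) (F : I -> V) : vnorm (\sum_i F i) <= \sum_i vnorm (F i).
Proof.
apply: (big_ind2 (fun u r => vnorm u <= r)) => [|u a v b ua vb|//].
  by rewrite vnorm0.
exact: le_trans (vnormD u v) (lerD ua vb).
Qed.

Lemma normc_coord_le x k : Normc.normc (x k 0) <= vnorm x.
Proof.
apply: le_of_sqr_le; first exact: vnorm_ge0.
rewrite -lecR -mulcJ_normc vnorm_sqr -cdot_real /cdot (bigD1 k) //= lerDl.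
by apply: sumr_ge0 => i _; apply: mul_conjC_ge0.
Qed.

Lemma vnorm_gt0 u : u != 0 -> 0 < vnorm u.
Proof.
by move=> u0; rewrite lt_def vnorm_ge0 andbT; apply: contra u0 => /eqP/vnorm_eq0 ->.
Qed.

Lemma unit_scaling u : u != 0 -> exists2 uh, vnorm uh = 1 & u = (vnorm u)%:C *: uh.
Proof.
move=> u0; have vu_gt0 := vnorm_gt0 u0.
exists ((vnorm u)^-1%:C *: u).
  by rewrite vnormZ normc_real ger0_norm ?invr_ge0 ?ltW // mulVf ?gt_eqF.
by rewrite scalerA -rmorphM divff ?gt_eqF // scale1r.
Qed.

Lemma vnormD_orth_sqr u v : cdot u v = 0 ->
  vnorm (u + v) ^+ 2 = vnorm u ^+ 2 + vnorm v ^+ 2.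
Proof.
move=> uv; rewrite !vnorm_sqr cdotDl !cdotDr (cdotC u v) uv rmorph0.
by rewrite !addr0 add0r raddfD.
Qed.

End InnerProduct.

Section OperatorNorm.
Variables (R : realType) (n : nat).
Local Notation C := R[i].
Local Notation V := 'cV[C]_n.
Implicit Types (A B : 'M[C]_n) (x y z u : V).

Lemma opnorm_bounded A : exists M, forall x, vnorm x = 1 -> vnorm (A *m x) <= M.
Proof.
exists (\sum_(j < n) vnorm (A *m delta_mx j 0)) => x x1.
have -> : A *m x = \sum_(j < n) x j 0 *: (A *m delta_mx j 0).
  rewrite {1}(matrix_sum_delta x) mulmx_sumr; apply: eq_bigr => j _.
  by rewrite big_ord1 scalemxAr.
apply: le_trans (vnorm_sum _) (ler_sum _ _) => j _.
by rewrite vnormZ ler_piMl ?vnorm_ge0 // -x1 normc_coord_le.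
Qed.

Lemma opnorm_ub A x : vnorm x = 1 -> vnorm (A *m x) <= opnorm A.
Proof.
move=> x1; have [M hM] := opnorm_bounded A.
by apply: ub_le_sup; [exists M => _ [y y1 <-]; apply: hM | exists x].
Qed.

Lemma opnorm_empty_sphere A : ~ (exists x : V, vnorm x = 1) -> opnorm A = 0.
Proof.
move=> no; rewrite /opnorm (_ : @usphere R n = set0) ?image_set0 ?sup0 //.
by apply/seteqP; split => // x x1; apply: no; exists x.
Qed.

Lemma opnorm_ge0 A : 0 <= opnorm A.
Proof.
have [[x x1]|no] := pselect (exists x : V, vnorm x = 1).
  exact: le_trans (vnorm_ge0 _) (opnorm_ub A x1).
by rewrite opnorm_empty_sphere.
Qed.

Lemma opnorm_le A M : 0 <= M ->
  (forall x, vnorm x = 1 -> vnorm (A *m x) <= M) -> opnorm A <= M.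
Proof.
move=> M0 hM; have [[x x1]|no] := pselect (exists x : V, vnorm x = 1).
  apply: ge_sup; first by exists (vnorm (A *m x)), x.
  by move=> _ [y y1 <-]; apply: hM.
by rewrite opnorm_empty_sphere.
Qed.

Lemma opnorm_mulmxv A x : vnorm (A *m x) <= opnorm A * vnorm x.
Proof.
have [->|x0] := eqVneq x 0; first by rewrite mulmx0 !vnorm0 mulr0.
have [xh xh1 {1}->] := unit_scaling x0.
rewrite -scalemxAr vnormZ normc_real ger0_norm ?vnorm_ge0 // mulrC.
by rewrite ler_wpM2r ?vnorm_ge0 ?opnorm_ub.
Qed.

Lemma opnormD A B : opnorm (A + B) <= opnorm A + opnorm B.
Proof.
apply: opnorm_le => [|x x1]; first by rewrite addr_ge0 ?opnorm_ge0.
rewrite mulmxDl; apply: le_trans (vnormD _ _) _.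
by rewrite lerD ?opnorm_ub.
Qed.

Lemma opnormN A : opnorm (- A) = opnorm A.
Proof.
have le_opp B : opnorm (- B) <= opnorm B.
  apply: opnorm_le => [|x x1]; first exact: opnorm_ge0.
  by rewrite mulNmx vnormN opnorm_ub.
by apply/le_anti/andP; split; last by have := le_opp (- A); rewrite opprK.
Qed.

Lemma opnorm_mulmx A B : opnorm (A *m B) <= opnorm A * opnorm B.
Proof.
apply: opnorm_le => [|x x1]; first by rewrite mulr_ge0 ?opnorm_ge0.
rewrite -mulmxA; apply: le_trans (opnorm_mulmxv _ _) _.
by rewrite ler_wpM2l ?opnorm_ge0 ?opnorm_ub.
Qed.

Lemma opnorm_commutator_le A B :
  opnorm (A *m B + B *m A) <= 2 * opnorm A * opnorm B /\
  opnorm (A *m B - B *m A) <= 2 * opnorm A * opnorm B.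
Proof.
have -> : 2 * opnorm A * opnorm B = opnorm A * opnorm B + opnorm B * opnorm A.
  by move: (opnorm A) (opnorm B) => a b; ring.
by split; apply: le_trans (opnormD _ _) _; rewrite ?opnormN lerD ?opnorm_mulmx.
Qed.

End OperatorNorm.

Section QNumericalRadius.
Variables (R : realType) (n : nat).
Local Notation C := R[i].
Local Notation V := 'cV[C]_n.
Implicit Types (q : C) (A : 'M[C]_n) (x y z u w : V).

Definition unit_pairs q : set (V * V) :=
  [set xy | vnorm xy.1 = 1 /\ vnorm xy.2 = 1 /\ cdot xy.1 xy.2 = q].

Lemma wqE q A :
  wq q A = sup [set Normc.normc (cdot (A *m xy.1) xy.2) | xy in unit_pairs q].
Proof. by []. Qed.

Lemma normc_cdot_mulmx_le A x y : vnorm x = 1 -> vnorm y = 1 ->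
  Normc.normc (cdot (A *m x) y) <= opnorm A.
Proof.
move=> x1 y1; apply: le_trans (normc_cdot_le _ _) _.
by rewrite y1 mulr1 opnorm_ub.
Qed.

Lemma wq_ub q A x y : unit_pairs q (x, y) -> Normc.normc (cdot (A *m x) y) <= wq q A.
Proof.
move=> xy; rewrite wqE; apply: ub_le_sup; last by exists (x, y).
by exists (opnorm A) => _ [[u v] [/= u1 [v1 _]] <-]; apply: normc_cdot_mulmx_le.
Qed.

(* This happens e.g. for [n = 1] and [|q| < 1]; [sup set0] is [0]. *)
Lemma wq_set0 q A : ~ (unit_pairs q !=set0) -> wq q A = 0.
Proof. by move/nonemptyPn => empty; rewrite wqE empty image_set0 sup0. Qed.

Lemma wq_le_opnorm q A : wq q A <= opnorm A.
Proof.
have [[[x y] xy]|empty] := pselect (unit_pairs q !=set0).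
  rewrite wqE; apply: ge_sup; first by exists (Normc.normc (cdot (A *m x) y)), (x, y).
  by move=> _ [[u v] [/= u1 [v1 _]] <-]; apply: normc_cdot_mulmx_le.
by rewrite wq_set0 ?opnorm_ge0.
Qed.

Lemma cdot_sub_proj_orth x z : vnorm z = 1 -> cdot (x - cdot x z *: z) z = 0.
Proof. by move=> z1; rewrite -scaleNr cdotDl cdotZl cdot_unit // mulr1 subrr. Qed.

(* Two unit vectors with [|<x, y>| < 1] cannot both be parallel to [z]. *)
Lemma exists_unit_orth q z : vnorm z = 1 -> unit_pairs q !=set0 ->
  Normc.normc q < 1 -> exists2 w, vnorm w = 1 & cdot w z = 0.
Proof.
move=> z1 [[x y] [/= x1 [y1 xy]]] q_lt1.
suff [u u0 uz] : exists2 u, u != 0 & cdot u z = 0.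
  have [w w1 def_u] := unit_scaling u0; exists w => //.
  move: uz; rewrite def_u cdotZl => /eqP; rewrite mulf_eq0 => /orP[/eqP|/eqP //].
  by move/complexI/eqP; rewrite gt_eqF ?vnorm_gt0.
have [/subr0_eq ex|u0] := eqVneq (x - cdot x z *: z) 0; last first.
  by exists (x - cdot x z *: z); rewrite ?cdot_sub_proj_orth.
have [/subr0_eq ey|u0] := eqVneq (y - cdot y z *: z) 0; last first.
  by exists (y - cdot y z *: z); rewrite ?cdot_sub_proj_orth.
move: ex ey x1 y1 xy; move: (cdot x z) (cdot y z) => a b -> ->.
rewrite !vnormZ z1 !mulr1 cdotZl cdotZr cdot_unit // mulr1 => a1 b1 q_def.
by move: q_lt1; rewrite -q_def Normc.normcM normc_conj a1 b1 mulr1 ltxx.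
Qed.

(* The pairs are [q^* z +- r w] with [r = sqrt (1 - |q|^2)] and [w] a unit
   vector orthogonal to [z], or [w = 0] when [|q| = 1]. *)
Lemma unit_pairs_midpoint q z : vnorm z = 1 -> unit_pairs q !=set0 ->
  Normc.normc q <= 1 ->
  exists y1 y2, [/\ unit_pairs q (z, y1), unit_pairs q (z, y2)
                  & y1 + y2 = (2 * q^*) *: z].
Proof.
move=> z1 ne q_le1.
pose r := Num.sqrt (1 - Normc.normc q ^+ 2).
have r2 : r ^+ 2 = 1 - Normc.normc q ^+ 2.
  by rewrite sqr_sqrtr // subr_ge0 exprn_ile1 ?normc_ge0.
have [w wz rw] : exists2 w, cdot w z = 0 & vnorm (r%:C *: w) = r.
  have [q_lt1|q_ge1] := ltP (Normc.normc q) 1.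
    have [w w1 wz] := exists_unit_orth z1 ne q_lt1.
    by exists w; rewrite // vnormZ w1 mulr1 normc_real ger0_norm ?sqrtr_ge0.
  exists 0; first by rewrite cdot0l.
  have q1 : Normc.normc q = 1 by apply/le_anti; rewrite q_le1.
  by rewrite scaler0 vnorm0 /r q1 expr1n subrr sqrtr0.
have zw : cdot z w = 0 by rewrite cdotC wz rmorph0.
have pair (e : R) : `|e| = 1 -> unit_pairs q (z, q^* *: z + (e * r)%:C *: w).
  move=> e1; split=> //=; split.
    apply/eqP; rewrite -sqrp_eq1 ?vnorm_ge0 // vnormD_orth_sqr.
      rewrite rmorphM -scalerA [vnorm (e%:C *: _)]vnormZ normc_real e1 mul1r rw.
      by rewrite vnormZ normc_conj z1 mulr1 r2 addrC subrK.
    by rewrite cdotZl cdotZr zw !mulr0.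
  by rewrite cdotDr !cdotZr cdot_unit // zw conjCK mulr0 mulr1 addr0.
exists (q^* *: z + (1 * r)%:C *: w), (q^* *: z + (-1 * r)%:C *: w).
split; [exact: pair (normr1 _) | by apply: pair; rewrite normrN normr1 |].
rewrite mul1r mulN1r rmorphN scaleNr addrACA subrr addr0.
by rewrite -scalerDl mulr_natl mulr2n.
Qed.

Lemma normc_cdot_diag_le_wq q A z : vnorm z = 1 -> unit_pairs q !=set0 ->
  Normc.normc q <= 1 -> Normc.normc q * Normc.normc (cdot (A *m z) z) <= wq q A.
Proof.
move=> z1 ne q_le1.
have [y1 [y2 [zy1 zy2 sum_y]]] := unit_pairs_midpoint z1 ne q_le1.
have : Normc.normc (cdot (A *m z) (y1 + y2)) <= wq q A + wq q A.
  rewrite cdotDr; apply: le_trans (le_normcD _ _) _.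
  by rewrite lerD ?wq_ub.
rewrite sum_y cdotZr rmorphM /= conjCK rmorph_nat !Normc.normcM normcMn.
by rewrite Normc.normc1; lra.
Qed.

End QNumericalRadius.

Arguments unit_pairs {R} n q.

Section SectorialMatrices.
Variables (R : realType) (n : nat).
Local Notation C := R[i].
Local Notation V := 'cV[C]_n.
Implicit Types (A : 'M[C]_n) (x y z u : V).

Lemma cdot_mulmx_scale_real A (r : R) u :
  cdot (A *m (r%:C *: u)) (r%:C *: u) = (r ^+ 2)%:C * cdot (A *m u) u.
Proof. by rewrite -scalemxAr cdotZl cdotZr conj_real mulrA -rmorphM expr2. Qed.

Lemma sector_subset_closed (alpha : R) : sector alpha `<=` closed_sector (tan alpha).
Proof. by move=> z [/ltW]. Qed.

Lemma Pi_s_closed_sector alpha A u : Pi_s alpha A ->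
  closed_sector (tan alpha) (cdot (A *m u) u).
Proof.
move=> hA; have [->|u0] := eqVneq u 0.
  by rewrite mulmx0 cdot0l; split; rewrite /= ?normr0 ?mulr0.
have [uh uh1 ->] := unit_scaling u0.
rewrite cdot_mulmx_scale_real; apply: closed_sector_scale; first exact: sqr_ge0.
by apply/sector_subset_closed/hA; exists uh.
Qed.

Lemma Re_cdot_le_sqr A W u :
  (forall z, vnorm z = 1 -> Re (cdot (A *m z) z) <= W) ->
  Re (cdot (A *m u) u) <= W * vnorm u ^+ 2.
Proof.
move=> hW; have [->|u0] := eqVneq u 0.
  by rewrite mulmx0 cdot0l vnorm0 expr0n mulr0.
have [uh uh1 ->] := unit_scaling u0.
rewrite cdot_mulmx_scale_real Re_realM vnormZ normc_real uh1 mulr1.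
by rewrite ger0_norm ?vnorm_ge0 // mulrC ler_wpM2r ?sqr_ge0 ?hW.
Qed.

Lemma mulmx_sectorial_bound t A x y :
  (forall u, closed_sector t (cdot (A *m u) u)) ->
  Normc.normc (cdot (A *m x) y) ^+ 2
    <= (1 + t ^+ 2) * (Re (cdot (A *m x) x) * Re (cdot (A *m y) y)).
Proof.
apply: (sectorial_form_bound (f := fun u v => cdot (A *m u) v)) => /=.
- by move=> u v w; rewrite mulmxDr cdotDl.
- by move=> a u w; rewrite -scalemxAr cdotZl.
- by move=> u v w; rewrite cdotDr.
- by move=> a u w; rewrite cdotZr.
Qed.

(* Apply the sectorial bound to [x] and [A x]. *)
Lemma opnorm_le_sectorial t A W : 0 <= W ->
  (forall u, closed_sector t (cdot (A *m u) u)) ->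
  (forall z, vnorm z = 1 -> Re (cdot (A *m z) z) <= W) ->
  opnorm A <= Num.sqrt (1 + t ^+ 2) * W.
Proof.
move=> W0 hA hW; apply: opnorm_le => [|x x1]; first by rewrite mulr_ge0 ?sqrtr_ge0.
have := mulmx_sectorial_bound x (A *m x) hA.
rewrite cdot_real -vnorm_sqr normc_real ger0_norm ?sqr_ge0 //.
have hy := Re_cdot_le_sqr (A *m x) hW.
have [[Rx_ge0 _] [Ry_ge0 _]] := (hA x, hA (A *m x)).
move: (vnorm (A *m x)) (vnorm_ge0 (A *m x)) hy => v v_ge0 hy hv.
have T_ge0 : 0 <= 1 + t ^+ 2 by rewrite addr_ge0 ?sqr_ge0.
apply: le_of_sqr_le; first by rewrite mulr_ge0 ?sqrtr_ge0.
rewrite exprMn sqr_sqrtr //.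
have [->|v_neq0] := eqVneq v 0; first by rewrite expr0n mulr_ge0 ?sqr_ge0.
have v2_gt0 : 0 < v ^+ 2 by rewrite exprn_gt0 // lt_def v_neq0.
rewrite -(ler_pM2l v2_gt0) -expr2; apply: le_trans hv _.
have -> : v ^+ 2 * ((1 + t ^+ 2) * W ^+ 2) = (1 + t ^+ 2) * (W * (W * v ^+ 2)).
  by ring.
by rewrite ler_wpM2l // ler_pM ?hW.
Qed.

Lemma sqrt_1Dtan2 (alpha : R) : 0 < cos alpha ->
  Num.sqrt (1 + tan alpha ^+ 2) = (cos alpha)^-1.
Proof.
move=> c_gt0; rewrite -cos2_tan2 ?gt_eqF // -exprVn sqrtr_sqr ger0_norm //.
by rewrite invr_ge0 ltW.
Qed.

Lemma normc_mul_opnorm_le_wq alpha q A : 0 < cos alpha -> Pi_s alpha A ->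
  unit_pairs n q !=set0 -> 0 < Normc.normc q -> Normc.normc q <= 1 ->
  Normc.normc q * opnorm A <= (cos alpha)^-1 * wq q A.
Proof.
move=> c_gt0 hA ne q_gt0 q_le1.
have diag_le z : vnorm z = 1 -> Re (cdot (A *m z) z) <= wq q A / Normc.normc q.
  move=> z1; rewrite ler_pdivlMr // mulrC.
  apply: le_trans (normc_cdot_diag_le_wq A z1 ne q_le1).
  by apply: ler_wpM2l; [exact: ltW | exact: Re_le_normc].
have W_ge0 : 0 <= wq q A / Normc.normc q.
  have [[x _] [/= x1 _]] := ne.
  exact: le_trans (Pi_s_closed_sector x hA).1 (diag_le x x1).
have := opnorm_le_sectorial W_ge0 (fun u => Pi_s_closed_sector u hA) diag_le.
by rewrite sqrt_1Dtan2 // mulrA => le_A; rewrite mulrC -ler_pdivlMr.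
Qed.

Lemma normc_wq_le_min q c (A B M : 'M[C]_n) : 0 <= c -> 0 <= Normc.normc q ->
  Normc.normc q * opnorm A <= c * wq q A ->
  Normc.normc q * opnorm B <= c * wq q B ->
  opnorm M <= 2 * opnorm A * opnorm B ->
  Normc.normc q * wq q M <= 2 * c * Num.min (wq q A * opnorm B) (wq q B * opnorm A).
Proof.
move=> c_ge0 q_ge0 hA hB hM.
have scale (a b wa : R) : 0 <= b -> Normc.normc q * a <= c * wa ->
    Normc.normc q * (2 * a * b) <= 2 * c * (wa * b).
  move=> b_ge0 h.
  have -> : Normc.normc q * (2 * a * b) = 2 * (Normc.normc q * a) * b by ring.
  have -> : 2 * c * (wa * b) = 2 * (c * wa) * b by ring.
  by rewrite ler_wpM2r // ler_wpM2l.
have qM : Normc.normc q * wq q M <= Normc.normc q * (2 * opnorm A * opnorm B).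
  by apply: ler_wpM2l => //; apply: le_trans (wq_le_opnorm q M) hM.
rewrite minr_pMr ?mulr_ge0 // le_min; apply/andP; split; apply: (le_trans qM).
  by apply: scale; rewrite ?opnorm_ge0.
by rewrite [2 * opnorm A * _]mulrAC; apply: scale; rewrite ?opnorm_ge0.
Qed.

End SectorialMatrices.

Theorem corollary2p20 (R : realType) (n : nat) (alpha : R)
    (A B : 'M[R[i]]_n) (q : R[i]) :
  0 <= alpha -> alpha < pi / 2 ->
  Pi_s alpha A -> Pi_s alpha B ->
  0 < Normc.normc q -> Normc.normc q <= 1 ->
  Normc.normc q * wq q (A *m B + B *m A)
    <= 2 * (cos alpha)^-1 * Num.min (wq q A * opnorm B) (wq q B * opnorm A)
  /\
  Normc.normc q * wq q (A *m B - B *m A)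
    <= 2 * (cos alpha)^-1 * Num.min (wq q A * opnorm B) (wq q B * opnorm A).
Proof.
move=> alpha_ge0 alpha_lt hA hB q_gt0 q_le1.
have cos_gt0 : 0 < cos alpha.
  apply: cos_gt0_pihalf; rewrite alpha_lt andbT; apply: lt_le_trans alpha_ge0.
  by rewrite oppr_lt0 divr_gt0 ?pi_gt0.
have [ne|empty] := pselect (unit_pairs n q !=set0); last first.
  have wq0 (M : 'M[R[i]]_n) : wq q M = 0 := wq_set0 M empty.
  rewrite !wq0; move: (opnorm A) (opnorm B) => a b.
  by rewrite !(mul0r, mulr0, minxx).
have bA := normc_mul_opnorm_le_wq cos_gt0 hA ne q_gt0 q_le1.
have bB := normc_mul_opnorm_le_wq cos_gt0 hB ne q_gt0 q_le1.
have c_ge0 : 0 <= (cos alpha)^-1 by rewrite invr_ge0 ltW.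
have [comm_D comm_B] := opnorm_commutator_le A B.
by split; apply: (normc_wq_le_min c_ge0 (ltW q_gt0) bA bB).
Qed.
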